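(* Let $p$ be an odd prime and let $\alpha\ge 1$, $\beta\ge 2$ be integers. Then the dihedral group $D_{2p^{\alpha}}\cong ZM(p^{\alpha},2,p^{\alpha}-1)$ of order $2p^\alpha$ and the dicyclic group $Dic_{4p^{\beta}}\cong ZM(p^{\beta},4,p^{\beta}-1)$ of order $4p^\beta$ are not $\psi$-divisible.
   Context: For a finite group $G$, $\psi(G)=\sum_{x\in G} o(x)$ denotes the sum of the orders of all elements of $G$. A finite group $G$ is called $\psi$-divisible if $\psi(H)$ divides $\psi(G)$ for every subgroup $H$ of $G$. For positive integers $m,n,r$ with $\gcd(m,n)=\gcd(m,r-1)=1$ and $r^n\equiv 1\pmod m$, $ZM(m,n,r)=\langle a,b \mid a^m=b^n=1,\ b^{-1}ab=a^r\rangle$. *)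

From mathcomp Require Import all_boot all_fingroup.
Set Implicit Arguments.
Unset Strict Implicit.
Unset Printing Implicit Defensive.
Local Open Scope group_scope.

Definition psi (gT : finGroupType) (G : {set gT}) : nat := (\sum_(x in G) #[x])%N.

Definition psi_divisible (gT : finGroupType) (G : {group gT}) : Prop :=
  forall H : {group gT}, H \subset G -> psi H %| psi G.

From mathcomp Require Import all_boot all_fingroup all_solvable zify.
Local Open Scope group_scope.

(* Write the group as <[x]> * <[y]> with y inverting the cyclic p-group <[x]>
   of order n.  Summing orders over the cosets of <[x]> gives
   psi G = psi <[x]> + 2 n in the dihedral case and psi G = 3 psi <[x]> + 8 n
   in the dicyclic one, so psi <[x]> would divide 2 n, resp. 8 n.  But
   psi <[x]> = 1 + (orders of the nontrivial elements) is coprime to p, hence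
   would divide 2, resp. 8, whereas it is at least 1 + (n - 1) p. *)

Section PsiCycles.
Variable gT : finGroupType.
Implicit Types x y : gT.

Lemma psi_mulg_cycles x y : <[x]> :&: <[y]> = 1 ->
  psi (<[x]> * <[y]>) = (\sum_(i < #[x]) \sum_(j < #[y]) #[x ^+ i * y ^+ j])%N.
Proof.
move=> tixy; pose f (t : 'I_#[x] * 'I_#[y]) := x ^+ t.1 * y ^+ t.2.
have im_f : f @: setT = <[x]> * <[y]>.
  apply/setP => g; apply/imsetP/mulsgP => [[[i j] _ ->]|].
    by exists (x ^+ i) (y ^+ j); rewrite ?mem_cycle.
  case=> _ _ /cyclePmin[i lt_i ->] /cyclePmin[j lt_j ->] ->.
  by exists (Ordinal lt_i, Ordinal lt_j).
have inj_f : {in setT &, injective f}.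
  by apply/imset_injP; rewrite im_f TI_cardMg // cardsT card_prod !card_ord.
rewrite /psi -im_f big_imset //= pair_big; apply: eq_bigl => t; exact: in_setT.
Qed.

Lemma psi_cycle x : psi <[x]> = (\sum_(i < #[x]) #[x ^+ i])%N.
Proof.
have := @psi_mulg_cycles x 1; rewrite cycle1 mulg1 setIg1 => ->//.
by apply: eq_bigr => i _; rewrite order1 big_ord1 mulg1.
Qed.

Lemma psi_cycle_pelt_ndvd p x m : prime p -> p.-elt x ->
  (0 < m < 1 + #[x].-1 * p)%N -> ~~ (psi <[x]> %| m * #[x])%N.
Proof.
move=> pr_p p_x /andP[m_gt0 lt_m].
have p_dvd (i : 'I_#[x].-1) : (p %| #[x ^+ i.+1])%N.
  have ne1 : x ^+ i.+1 != 1.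
    rewrite -order_dvdn; apply: contraTN (ltn_ord i) => /(dvdn_leq (ltn0Sn i)); lia.
  by case/pgroup_pdiv: (p_eltX i.+1 p_x); rewrite ?cycle_eq1.
have psiE : psi <[x]> = (1 + \sum_(i < #[x].-1) #[x ^+ i.+1])%N.
  by rewrite psi_cycle; case: #[x] (order_gt0 x) => // n _; rewrite big_ord_recl order1.
have co_psi_p : coprime (psi <[x]>) p.
  rewrite coprime_sym prime_coprime // psiE dvdn_addl ?dvdn1 ?gtn_eqF ?prime_gt1 //.
  by apply: dvdn_sum => i _; apply: p_dvd.
have psi_ge : (1 + #[x].-1 * p <= psi <[x]>)%N.
  rewrite psiE leq_add2l -[X in (X * p)%N]card_ord -sum_nat_const.
  by apply: leq_sum => i _; apply: dvdn_leq; rewrite ?order_gt0 ?p_dvd.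
have [k ox] := p_natP p_x.
rewrite Gauss_dvdl ?ox ?coprimeXr //; apply/negP => /(dvdn_leq m_gt0); lia.
Qed.

Lemma psi_ndivisible_by_cycle (G : {group gT}) x (c m p : nat) :
    prime p -> p.-elt x -> <[x]> \subset G ->
    psi G = (c * psi <[x]> + m * #[x])%N -> (0 < m < 1 + #[x].-1 * p)%N ->
  ~ psi_divisible G.
Proof.
move=> pr_p p_x sXG psiG lt_m /(_ _ sXG).
rewrite psiG (dvdn_addr _ (dvdn_mull c (dvdnn _))).
by apply/negP; apply: psi_cycle_pelt_ndvd pr_p p_x lt_m.
Qed.
End PsiCycles.

Section Inversion.
Variable gT : finGroupType.
Implicit Types a b : gT.

Lemma conjgX_inv a b j : a ^ b = a^-1 -> a ^ (b ^+ j) = if odd j then a^-1 else a.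
Proof.
move=> ab; elim: j => [|j IHj]; first by rewrite conjg1.
by rewrite expgSr conjgM IHj /=; case: (odd j); rewrite /= ?conjVg ab ?invgK.
Qed.

Lemma sqrMg_inv a b : a ^ b = a^-1 -> (a * b) ^+ 2 = b ^+ 2.
Proof.
move=> ab; have ba : b * a = a^-1 * b by rewrite [RHS]conjgC conjVg ab invgK.
by rewrite expgS expg1 mulgA -(mulgA a) ba mulgA mulgV mul1g expgS expg1.
Qed.
End Inversion.

Section InvertedCycle.
Variables (gT : finGroupType) (x y : gT).
Hypotheses (tiXY : <[x]> :&: <[y]> = 1) (xV : x ^ y = x^-1).

Let invXY i j : (x ^+ i) ^ (y ^+ j) = if odd j then (x ^+ i)^-1 else x ^+ i.
Proof. by apply: conjgX_inv; rewrite conjXg xV expgVn. Qed.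

Lemma psi_dihedral : #[y] = 2 -> psi (<[x]> * <[y]>) = (psi <[x]> + 2 * #[x])%N.
Proof.
move=> oy; rewrite psi_mulg_cycles // psi_cycle oy.
transitivity (\sum_(i < #[x]) (#[x ^+ i] + 2))%N; last first.
  by rewrite big_split sum_nat_const card_ord mulnC.
apply: eq_bigr => i _; rewrite big_ord_recl big_ord1 mulg1 expg1; congr (_ + _)%N.
have y_notin_x : y \notin <[x]>.
  apply/negP => xy; have : y \in <[x]> :&: <[y]> by rewrite inE xy cycle_id.
  by rewrite tiXY inE => /eqP y1; move: oy; rewrite y1 order1.
apply/prime_nt_dvdP => //; last first.
  by rewrite order_dvdn sqrMg_inv ?(invXY i 1) // -oy expg_order.
rewrite order_eq1; apply: contraNneq y_notin_x => /eqP.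
by rewrite -eq_invg_mul => /eqP <-; rewrite groupV mem_cycle.
Qed.

Lemma psi_dicyclic : #[y] = 4 -> odd #[x] ->
  psi (<[x]> * <[y]>) = (3 * psi <[x]> + 8 * #[x])%N.
Proof.
move=> oy odd_x; rewrite psi_mulg_cycles // psi_cycle oy.
transitivity (\sum_(i < #[x]) (3 * #[x ^+ i] + 8))%N; last first.
  by rewrite big_split sum_nat_const card_ord -big_distrr mulnC.
apply: eq_bigr => i _.
have oy2 : #[y ^+ 2] = 2%N by rewrite orderXdiv oy.
have sqr_y2 (g : gT) : g ^+ 2 = y ^+ 2 -> #[g] = 4%N.
  by move=> gy; apply: (@orderXprime _ 2 2); rewrite ?gy ?oy2.
have o1 : #[x ^+ i * y] = 4%N by rewrite sqr_y2 // sqrMg_inv ?(invXY i 1).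
have o3 : #[x ^+ i * y ^+ 3] = 4%N.
  rewrite sqr_y2 // sqrMg_inv ?(invXY i 3) // -expgM -[(3 * 2)%N]/(4 + 2)%N.
  by rewrite expgD -oy expg_order mul1g.
have o2 : #[x ^+ i * y ^+ 2] = (2 * #[x ^+ i])%N.
  have cxy2 : commute (x ^+ i) (y ^+ 2) by apply/commgP/conjg_fixP; rewrite (invXY i 2).
  have co_xy2 : coprime #[x ^+ i] #[y ^+ 2].
    by rewrite oy2 coprimen2 (dvdn_odd (orderXdvd x i)).
  by rewrite orderM // oy2 mulnC.
rewrite !big_ord_recl big_ord0 /= expg0 mulg1 expg1 o1 o2 o3; lia.
Qed.
End InvertedCycle.

(* The extension Extremal.gtype n k n.-1 satisfies the relations and has order
   n k, so the presentation loses nothing: #[x] = n, #[y] = k and the product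
   <[x]> * <[y]> is as large as possible. *)
Lemma ext_dihedral_generators {gT : finGroupType} {G : {group gT}} {n k : nat} :
    (1 < n)%N -> (1 < k)%N -> (2 %| k)%N ->
    G \isog Grp (a : b : (a ^+ n, b ^+ k, a ^ b = a ^+ (n - 1))) ->
  exists x y : gT, [/\ G :=: <[x]> * <[y]>, <[x]> :&: <[y]> = 1,
                       #[x] = n, #[y] = k & x ^ y = x^-1].
Proof.
move=> n_gt1 k_gt1 even_k isoG.
have invE (rT : finGroupType) (z : rT) : z ^+ n = 1 -> z^-1 = z ^+ (n - 1).
  by move=> zn; apply/eqP; rewrite eq_invg_mul -expgS subn1 prednK ?zn // ltnW.
have homED : [set: Extremal.gtype n k n.-1]%G \homg G.
  rewrite isoG; case/existsP: (isoGrp_hom (Grp_ext_dihedral n_gt1 k_gt1 even_k)).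
  move=> [z t] /= /eqP[defED zn tk zt]; apply/existsP; exists (z, t).
  by rewrite /= !xpair_eqE defED zn tk zt invE // !eqxx.
case/existsP: (isoGrp_hom isoG) => -[x y] /= /eqP[defG xn yk].
rewrite -invE // => xy; exists x, y.
have defXY : G :=: <[x]> * <[y]>.
  by rewrite -defG norm_joinEr // norms_cycle xy groupV cycle_id.
have dvd_nk : (#[x] * #[y] %| n * k)%N by rewrite dvdn_mul // order_dvdn ?xn ?yk.
have cardG : #|G| = (n * k)%N.
  apply/eqP; rewrite eqn_dvd (dvdn_trans _ dvd_nk) ?defXY ?dvdn_cardMg //=.
  have := card_homg homED; rewrite card_ext_dihedral //.
  by rewrite -muln2 mulnCA -divn2 divnK // -defXY.
have oXY : (#[x] * #[y])%N = (n * k)%N.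
  by apply/eqP; rewrite eqn_dvd dvd_nk -cardG defXY dvdn_cardMg.
have [le_xn le_yk] : (#[x] <= n)%N /\ (#[y] <= k)%N.
  by split; apply: dvdn_leq; rewrite ?order_dvdn ?xn ?yk // ltnW.
split=> //; [apply: cardMg_TI; rewrite -defXY cardG -oXY // | nia | nia].
Qed.

Theorem corollary2p5 (p alpha beta : nat) :
  prime p -> odd p -> (1 <= alpha)%N -> (2 <= beta)%N ->
  (forall (gT : finGroupType) (G : {group gT}),
     G \isog Grp (a : b : (a ^+ (p ^ alpha), b ^+ 2, a ^ b = a ^+ (p ^ alpha - 1))) ->
     ~ psi_divisible G) /\
  (forall (gT : finGroupType) (G : {group gT}),
     G \isog Grp (a : b : (a ^+ (p ^ beta), b ^+ 4, a ^ b = a ^+ (p ^ beta - 1))) ->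
     ~ psi_divisible G).
Proof.
move=> pr_p odd_p alpha_gt0 beta_gt1.
have p_gt2 : (2 < p)%N by move: (prime_gt1 pr_p) odd_p; case: (p) => [|[|[|]]].
have le_pX e1 e2 : (e1 <= e2)%N -> (p ^ e1 <= p ^ e2)%N.
  exact: leq_pexp2l (prime_gt0 pr_p).
split=> gT G isoG.
- have ge_pX := le_pX 1%N alpha alpha_gt0; rewrite expn1 in ge_pX.
  have n_gt1 : (1 < p ^ alpha)%N by lia.
  have [x [y [defG tiXY ox oy xV]]] := ext_dihedral_generators (k := 2) n_gt1 isT isT isoG.
  apply: (@psi_ndivisible_by_cycle _ G x 1 2 p); rewrite ?ox ?defG ?mulG_subl //.
  - by rewrite /p_elt ox pnatX pnat_id.
  - by rewrite psi_dihedral // mul1n ox.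
  nia.
- have ge_pX := le_pX 2%N beta beta_gt1; rewrite -mulnn in ge_pX.
  have n_gt1 : (1 < p ^ beta)%N by nia.
  have [x [y [defG tiXY ox oy xV]]] := ext_dihedral_generators (k := 4) n_gt1 isT isT isoG.
  apply: (@psi_ndivisible_by_cycle _ G x 3 8 p); rewrite ?ox ?defG ?mulG_subl //.
  - by rewrite /p_elt ox pnatX pnat_id.
  - by rewrite psi_dicyclic // ?ox ?oddX ?odd_p ?orbT.
  nia.
Qed.
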